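(* Let $\mathcal O$ be an order in a definite quaternion algebra $H$ over $\mathbb Q$. Then $e_d=0$ unless $d\equiv0\pmod{\omega(\mathcal O)}$.
   Context: $N$, $\mathrm{tr}$ reduced norm and trace; $\Delta(x)=\mathrm{tr}(x)^2-4N(x)$; $\omega(\mathcal O)=\gcd\{\Delta(x):x\in\mathcal O\}$ (positive). Left $\mathcal O$-ideals: lattices $\mathfrak a$ with $\mathfrak a\otimes\mathbb Z_q=\mathcal O_qx_q$, $x_q\in H_q^\times$, for all $q$; $\mathcal O_r(\mathfrak a)=\{x\in H:\mathfrak ax\subseteq\mathfrak a\}$; classes $[\mathfrak a]$ modulo $\mathfrak a\sim\mathfrak ax$, $x\in H^\times$; height pairing $\langle[\mathfrak a],[\mathfrak b]\rangle=\frac12\#\{x\in H^\times:\mathfrak ax=\mathfrak b\}$, $[\mathfrak a]^\vee=[\mathfrak a]/\langle[\mathfrak a],[\mathfrak a]\rangle$. For $d\ge0$ with $-d\equiv0,1\pmod 4$, $a_d([\mathfrak a])$ is the number of $\mathbb Z$-translation orbits of $\{x\in\mathcal O_r(\mathfrak a):\Delta(x)=-d\}$, $a_d=0$ otherwise; $e_d=\sum_{[\mathfrak a]}a_d([\mathfrak a])[\mathfrak a]^\vee$. *)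

From HB Require Import structures.
From mathcomp Require Import all_boot all_algebra.
From Stdlib Require Import ClassicalEpsilon.
Set Implicit Arguments. Unset Strict Implicit. Unset Printing Implicit Defensive.
Import GRing.Theory Num.Theory.
Local Open Scope ring_scope.

(** The definite quaternion algebra H = (a,b / Q), a < 0, b < 0, realised on
    Q^4 with basis 1, i, j, k = ij, i^2 = a, j^2 = b, ij = -ji. *)
Definition quat : Type := (rat * rat * rat * rat)%type.

Definition qmk (x0 x1 x2 x3 : rat) : quat := (x0, x1, x2, x3).
Definition c0 (x : quat) : rat := x.1.1.1.
Definition c1 (x : quat) : rat := x.1.1.2.
Definition c2 (x : quat) : rat := x.1.2.
Definition c3 (x : quat) : rat := x.2.

Definition qzero : quat := qmk 0 0 0 0.
Definition qone : quat := qmk 1 0 0 0.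
Definition qadd (x y : quat) : quat :=
  qmk (c0 x + c0 y) (c1 x + c1 y) (c2 x + c2 y) (c3 x + c3 y).
Definition qscale (r : rat) (x : quat) : quat :=
  qmk (r * c0 x) (r * c1 x) (r * c2 x) (r * c3 x).

Definition qmul (a b : rat) (x y : quat) : quat :=
  qmk (c0 x * c0 y + a * c1 x * c1 y + b * c2 x * c2 y - a * b * c3 x * c3 y)
      (c0 x * c1 y + c1 x * c0 y - b * c2 x * c3 y + b * c3 x * c2 y)
      (c0 x * c2 y + c2 x * c0 y + a * c1 x * c3 y - a * c3 x * c1 y)
      (c0 x * c3 y + c3 x * c0 y + c1 x * c2 y - c2 x * c1 y).

Definition qnrd (a b : rat) (x : quat) : rat :=
  c0 x ^+ 2 - a * c1 x ^+ 2 - b * c2 x ^+ 2 + a * b * c3 x ^+ 2.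
Definition qtrd (x : quat) : rat := 2 * c0 x.
Definition qdisc (a b : rat) (x : quat) : rat := qtrd x ^+ 2 - 4 * qnrd a b x.

Definition qunit (a b : rat) (x : quat) : Prop :=
  exists y, qmul a b x y = qone /\ qmul a b y x = qone.

Definition qset := quat -> Prop.

Definition lincomb (r1 r2 r3 r4 : rat) (v1 v2 v3 v4 : quat) : quat :=
  qadd (qadd (qscale r1 v1) (qscale r2 v2)) (qadd (qscale r3 v3) (qscale r4 v4)).

Definition is_lattice (L : qset) : Prop :=
  exists v1 v2 v3 v4 : quat,
    (forall r1 r2 r3 r4 : rat, lincomb r1 r2 r3 r4 v1 v2 v3 v4 = qzero ->
       [/\ r1 = 0, r2 = 0, r3 = 0 & r4 = 0]) /\
    (forall y, L y <-> exists n1 n2 n3 n4 : int,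
       y = lincomb n1%:~R n2%:~R n3%:~R n4%:~R v1 v2 v3 v4).

Definition is_order (a b : rat) (O : qset) : Prop :=
  [/\ is_lattice O, O qone & forall x y, O x -> O y -> O (qmul a b x y)].

(** L (x) Z_(q): localisation of a lattice at the prime q. *)
Definition loc (q : nat) (L : qset) : qset :=
  fun y => exists n : nat, ~~ (q %| n)%N /\ L (qscale n%:R y).

Definition left_ideal (a b : rat) (O A : qset) : Prop :=
  is_lattice A /\
  forall q : nat, prime q -> exists x : quat, qunit a b x /\
    forall y, loc q A y <-> exists z, loc q O z /\ y = qmul a b z x.

Definition right_order (a b : rat) (A : qset) : qset :=
  fun x => forall y, A y -> A (qmul a b y x).

Definition rmulset (a b : rat) (A : qset) (x : quat) : qset :=
  fun y => exists z, A z /\ y = qmul a b z x.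

Definition count_classes (S : qset) (R : quat -> quat -> Prop) (n : nat) : Prop :=
  exists s : seq quat,
    [/\ size s = n,
        (forall x, x \in s -> S x),
        (forall i j : nat, (i < n)%N -> (j < n)%N ->
           R (nth qzero s i) (nth qzero s j) -> i = j) &
        (forall x, S x -> exists2 y, y \in s & R x y)].

(** The number of classes (meaningful when it is finite). *)
Definition nclasses (S : qset) (R : quat -> quat -> Prop) : nat :=
  epsilon (inhabits 0%N) (count_classes S R).

Definition ztransl (x y : quat) : Prop :=
  exists n : int, y = qadd x (qscale n%:~R qone).

Definition a_d (a b : rat) (d : nat) (A : qset) : nat :=
  if (d %% 4 == 0)%N || (d %% 4 == 3)%N then
    nclasses (fun x => right_order a b A x /\ qdisc a b x = - d%:R) ztransl
  else 0%N.

Definition height (a b : rat) (A : qset) : rat :=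
  (nclasses (fun x => qunit a b x /\ forall y, rmulset a b A x y <-> A y) eq)%:R / 2.

(** Coefficient of the class [A] in e_d = sum_[A] a_d([A]) [A]^vee. *)
Definition e_coeff (a b : rat) (d : nat) (A : qset) : rat :=
  (a_d a b d A)%:R / height a b A.

Definition divides_all_disc (a b : rat) (O : qset) (m : nat) : Prop :=
  forall x, O x -> exists k : int, qdisc a b x = m%:R * k%:~R.
Definition is_omega (a b : rat) (O : qset) (w : nat) : Prop :=
  [/\ (0 < w)%N, divides_all_disc a b O w &
      forall m : nat, divides_all_disc a b O m -> (m %| w)%N].

(* Let x be in the right order of A with Delta(x) = -d, and fix a prime q.
   Locally A_q = O_q p with p a unit, so p x = z p for some z in O_q; being a
   conjugate of x, z has Delta(z) = -d.  Some n prime to q puts n z in O, so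
   omega(O) divides Delta(n z) = -n^2 d, and as n is a unit at q, the q-part
   of omega(O) divides d.  This holding for every q, omega(O) divides d.  So
   for d not divisible by omega(O) no such x exists and every a_d([A]) is 0. *)
From mathcomp Require Import all_boot all_algebra.
From mathcomp Require Import ring.
From Stdlib Require Import ClassicalEpsilon.
Import GRing.Theory Num.Theory.
Local Open Scope ring_scope.

Lemma quatP (x y : quat) :
  c0 x = c0 y -> c1 x = c1 y -> c2 x = c2 y -> c3 x = c3 y -> x = y.
Proof.
case: x => [[[x0 x1] x2] x3]; case: y => [[[y0 y1] y2] y3].
by rewrite /c0 /c1 /c2 /c3 /= => -> -> -> ->.
Qed.

Ltac quat_ring :=
  rewrite /qdisc /qmul /qscale /qmk /qone /qnrd /qtrd /c0 /c1 /c2 /c3 /=; ring.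

Section QuaternionArithmetic.

Variables a b : rat.

Lemma mulqA u v t : qmul a b (qmul a b u v) t = qmul a b u (qmul a b v t).
Proof. by apply: quatP; quat_ring. Qed.

Lemma mulq1 u : qmul a b u qone = u.
Proof. by apply: quatP; quat_ring. Qed.

Lemma mul1q u : qmul a b qone u = u.
Proof. by apply: quatP; quat_ring. Qed.

Lemma scale1q u : qscale 1 u = u.
Proof. by apply: quatP; quat_ring. Qed.

Lemma scaleqAl r u v : qscale r (qmul a b u v) = qmul a b (qscale r u) v.
Proof. by apply: quatP; quat_ring. Qed.

Lemma qtrd_mulC u v : qtrd (qmul a b u v) = qtrd (qmul a b v u).
Proof. by quat_ring. Qed.

Lemma qnrdM u v : qnrd a b (qmul a b u v) = qnrd a b u * qnrd a b v.
Proof. by quat_ring. Qed.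

Lemma qnrd1 : qnrd a b qone = 1.
Proof. by quat_ring. Qed.

Lemma qdiscZ r u : qdisc a b (qscale r u) = r ^+ 2 * qdisc a b u.
Proof. by quat_ring. Qed.

Lemma qdisc_conj {p p' x z} :
  qmul a b p p' = qone -> qmul a b p' p = qone ->
  qmul a b z p = qmul a b p x -> qdisc a b z = qdisc a b x.
Proof.
move=> pp' p'p zp_px.
have -> : z = qmul a b (qmul a b p x) p' by rewrite -zp_px mulqA pp' mulq1.
have trd_eq : qtrd (qmul a b (qmul a b p x) p') = qtrd x.
  by rewrite mulqA qtrd_mulC mulqA p'p mulq1.
have nrd_eq : qnrd a b (qmul a b (qmul a b p x) p') = qnrd a b x.
  by rewrite !qnrdM mulrC mulrA -qnrdM p'p qnrd1 mul1r.
by rewrite /qdisc trd_eq nrd_eq.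
Qed.

End QuaternionArithmetic.

Lemma loc_qone q (L : qset) : prime q -> L qone -> loc q L qone.
Proof.
move=> q_pr L1; exists 1%N; split; last by rewrite scale1q.
by rewrite dvdn1; case: eqP q_pr => // ->.
Qed.

Lemma loc_right_order {a b q} {A : qset} {x y} :
  right_order a b A x -> loc q A y -> loc q A (qmul a b y x).
Proof. by move=> Ax [n [q'n Any]]; exists n; rewrite scaleqAl; split=> //; apply: Ax. Qed.

Lemma right_order_disc_loc {a b} {O A : qset} {q x} :
  O qone -> left_ideal a b O A -> prime q -> right_order a b A x ->
  exists2 z, loc q O z & qdisc a b z = qdisc a b x.
Proof.
move=> O1 [_ A_loc] q_pr Ax.
have [p [[p' [pp' p'p]] Aq_gen]] := A_loc q q_pr.
have Aq_p : loc q A p by apply/Aq_gen; exists qone; rewrite mul1q; split=> //; exact: loc_qone.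
have [z [Oq_z px_zp]] := iffLR (Aq_gen _) (loc_right_order Ax Aq_p).
by exists z => //; apply: qdisc_conj pp' p'p (esym px_zp).
Qed.

Lemma loc_disc_dvd {a b} {O : qset} {q w z} :
  divides_all_disc a b O w -> loc q O z ->
  exists2 n : nat, ~~ (q %| n)%N &
    exists k : int, n%:R ^+ 2 * qdisc a b z = w%:R * k%:~R.
Proof. by move=> O_w [n [q'n Onz]]; exists n => //; rewrite -qdiscZ; apply: O_w. Qed.

Lemma nclasses_pred0 (S : qset) R : (forall x, ~ S x) -> nclasses S R = 0%N.
Proof.
move=> S0.
have ex0 : exists n, count_classes S R n.
  by exists 0%N, [::]; split=> // x /S0.
have := epsilon_spec (inhabits 0%N) _ ex0; rewrite -/(nclasses S R) => -[s [<- sS _ _]].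
by case: s sS => //= x s /(_ x (mem_head x s)) /S0.
Qed.

Lemma dvdn_of_rat (m n : nat) (k : int) : n%:R = m%:R * k%:~R :> rat -> (m %| n)%N.
Proof.
move=> n_mk; have /intr_inj nZ_mk : n%:Z%:~R = (m%:Z * k)%:~R :> rat.
  by rewrite intrM; exact: n_mk.
by move/(congr1 absz): nZ_mk; rewrite abszM /= => ->; apply: dvdn_mulr.
Qed.

Lemma dvdn_local {w d : nat} (e : nat) : (0 < w)%N ->
  (forall q, prime q -> exists2 n, ~~ (q %| n)%N & (w %| n ^ e * d)%N) ->
  (w %| d)%N.
Proof.
move=> w_gt0 loc_dvd; apply/dvdn_partP => // q.
rewrite mem_primes => /and3P [q_pr _ _].
have [n q'n w_ned] := loc_dvd q q_pr.
have wq_ne : coprime (w`_q) (n ^ e).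
  by rewrite p_part coprimeXl // coprimeXr // prime_coprime.
by rewrite -(Gauss_dvdr _ wq_ne); apply: dvdn_trans (dvdn_part _ _) w_ned.
Qed.

Theorem corollary1 (a b : rat) (ha : a < 0) (hb : b < 0) (O : qset)
  (hO : is_order a b O) (w : nat) (hw : is_omega a b O w) (d : nat)
  (hd : ~~ (w %| d)%N) :
  forall A : qset, left_ideal a b O A -> e_coeff a b d A = 0.
Proof.
move=> A A_ideal; case: hO => _ O1 _; case: hw => w_gt0 O_w _.
rewrite /e_coeff /a_d nclasses_pred0 ?if_same ?mul0r // => x [Ax x_disc].
move/negP: hd; apply; apply: (dvdn_local 2 w_gt0) => q q_pr.
have [z Oq_z z_disc] := right_order_disc_loc O1 A_ideal q_pr Ax.
have [n q'n [k nz_wk]] := loc_disc_dvd O_w Oq_z.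
exists n => //; apply: (@dvdn_of_rat _ _ (- k)).
by rewrite natrM natrX mulrNz mulrN -nz_wk z_disc x_disc mulrN opprK.
Qed.
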